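(* Let $q$ be an odd prime power, $m=2t$, and $n=\frac{q^m+1}{2}$. (1) If $m\ge4$, then every integer $i$ with $\frac{q^t+1}{2}\le i\le q^t+1$, $i\not\equiv0\pmod q$ and $i\notin\{\frac{q^t+1}{2},q^t+1\}$ is a coset leader modulo $n$ with $|C_i|=2m$, while $\frac{q^t+1}{2}$ and $q^t+1$ are not coset leaders modulo $n$. (2) If $m\ge8$, then every integer $i$ with $\frac{q^t+1}{2}\le i\le\frac{q^{t+1}-1}{2}$, $i\not\equiv0\pmod q$ and $i\notin X_1\cup X_2\cup X_3\cup X_4\cup X_5$ is a coset leader modulo $n$ with $|C_i|=2m$, while no element of $X_1\cup\dots\cup X_5$ in this range with $i\not\equiv 0\pmod q$ is a coset leader, where (all parameters integers) $X_1=\{aq^t+b:1\le b\le a\le\frac{q-1}{2}\}$, $X_2=\{aq^t-b:1\le b<a\le\frac{q-1}{2}\}$, $X_3=\{aq^t+\frac{q^t-1}{2}+b,\ aq^t+\frac{q^t+1}{2}-b:1\le b\le a<\frac{q-1}{2}\}$, $X_4=\{a(q^t+1)+\frac{q^t+1}{2}:0\le a<\frac{q-1}{2}\}$, $X_5=\{i:\frac{q^{t+1}-q^2}{2}+1\le i\le\frac{q^{t+1}-1}{2},\ q\nmid i\}$.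
   Context: For $0\le s\le n-1$, $C_s=\{sq^i\bmod n:i\ge0\}$ is the $q$-cyclotomic coset of $s$ modulo $n$; its least element is its coset leader. *)

From mathcomp Require Import all_boot.
Set Implicit Arguments. Unset Strict Implicit. Unset Printing Implicit Defensive.

Definition in_coset (q n s x : nat) : Prop := exists i : nat, x = (s * q ^ i) %% n.

(* The coset as a finite set of residues mod n.  The exponent i is taken in
   [0, n): by pigeonhole every value s q^i mod n (i >= 0) already occurs for
   some i < n, so this is exactly C_s. *)
Definition cyc_coset (q n s : nat) : {set 'I_n} :=
  [set x : 'I_n | [exists i : 'I_n, (s * q ^ i) %% n == x]].

Definition coset_leader (q n s : nat) : Prop :=
  s < n /\ forall x, in_coset q n s x -> s <= x.

Definition prime_power (q : nat) : Prop :=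
  exists p k, prime p /\ 0 < k /\ q = p ^ k.

Definition X1 (q t i : nat) : Prop :=
  exists a b, [/\ 1 <= b, b <= a, a <= (q - 1) %/ 2 & i = a * q ^ t + b].
Definition X2 (q t i : nat) : Prop :=
  exists a b, [/\ 1 <= b, b < a, a <= (q - 1) %/ 2 & i = a * q ^ t - b].
Definition X3 (q t i : nat) : Prop :=
  exists a b, [/\ 1 <= b, b <= a, a < (q - 1) %/ 2 &
    i = a * q ^ t + (q ^ t - 1) %/ 2 + b \/ i = a * q ^ t + (q ^ t + 1) %/ 2 - b].
Definition X4 (q t i : nat) : Prop :=
  exists a, a < (q - 1) %/ 2 /\ i = a * (q ^ t + 1) + (q ^ t + 1) %/ 2.
Definition X5 (q t i : nat) : Prop :=
  [/\ (q ^ t.+1 - q ^ 2) %/ 2 + 1 <= i, i <= (q ^ t.+1 - 1) %/ 2 & ~~ (q %| i)].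

From mathcomp Require Import all_boot zify.

Set Implicit Arguments.
Unset Strict Implicit.
Unset Printing Implicit Defensive.

(* Let N = q^(2t) + 1 = 2n and u = 2i.  Doubling identifies the coset of i
   modulo n with the residues of u q^d modulo N, and q^(2t) = -1 (mod N), so
   the residue at d + 2t is N minus the residue at d.  Hence i is a coset
   leader with |C_i| = 4t = 2m as soon as u < (u q^d mod N) < N - u for
   0 < d < 2t.  Write u = A q^t + B in base q^t: multiplication by q^t maps u
   to B q^t - A (mod N), which lies in that window iff A < B < q^t - A.  For
   d < t the residue is just u q^d, and for t < d < 2t it is the same digit
   swap applied to u q^(d-t), whose low digit is a nonzero multiple of
   q^(d-t) and therefore stays at distance at least q from 0 and q^t; this
   needs only a size bound on u, which is where X_5 is excluded.  Conversely
   B <= A makes u q^t, and A + B > q^t makes u q^(3t), a smaller element of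
   the coset; the sets X_1, ..., X_4 are exactly the i whose doubles have such
   digits, while on X_5 the witness is u q^(3t-1). *)

Lemma modn_sqrS_mulsqr Q x : x %% (Q * Q + 1) != 0 ->
  (x * (Q * Q)) %% (Q * Q + 1) = Q * Q + 1 - x %% (Q * Q + 1).
Proof.
set N := Q * Q + 1 => r_neq0.
have r_lt : x %% N < N by rewrite ltn_pmod // /N; lia.
have -> : x * (Q * Q) = (x - x %/ N - 1) * N + (N - x %% N).
  move: r_neq0 r_lt (divn_eq x N); rewrite /N.
  move: (x %/ _) (x %% _) => k r r_neq0 r_lt ex.
  have k_lt : k + 1 <= x by rewrite ex; nia.
  rewrite {1}ex; nia.
by rewrite modnMDl modn_small //; lia.
Qed.

Lemma modn_sqrS_mulsqr2 Q x :
  (x * (Q * Q * (Q * Q))) %% (Q * Q + 1) = x %% (Q * Q + 1).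
Proof.
have [-> | Q_gt0] := posnP Q; first by rewrite !modn1.
have -> : x * (Q * Q * (Q * Q)) = x * (Q * Q - 1) * (Q * Q + 1) + x.
  have : 0 < Q * Q by rewrite muln_gt0 Q_gt0.
  by case: (Q * Q) => // R _; nia.
by rewrite modnMDl.
Qed.

Lemma modn_sqrS_mul_digits Q a b : a < Q -> 0 < b -> b < Q ->
  ((a * Q + b) * Q) %% (Q * Q + 1) = b * Q - a.
Proof.
move=> a_lt b_gt0 b_lt.
have -> : (a * Q + b) * Q = a * (Q * Q + 1) + (b * Q - a) by nia.
rewrite modnMDl modn_small //; nia.
Qed.

Lemma odd_pow_sqrS_half q t : odd q ->
  q ^ t * q ^ t + 1 = 2 * ((q ^ (2 * t) + 1) %/ 2).
Proof.
move=> q_odd; rewrite -expnD addnn -mul2n [2 * (_ %/ 2)]mulnC divnK //.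
by rewrite dvdn2 oddD oddX q_odd orbT.
Qed.

Lemma double_modn_half q t x d : odd q ->
  2 * ((x * q ^ d) %% ((q ^ (2 * t) + 1) %/ 2)) =
  (2 * x * q ^ d) %% (q ^ t * q ^ t + 1).
Proof. by move=> q_odd; rewrite (odd_pow_sqrS_half t q_odd) muln_modr mulnA. Qed.

Lemma not_coset_leader_of_small_residue q t i d : odd q ->
  (2 * i * q ^ d) %% (q ^ t * q ^ t + 1) < 2 * i ->
  ~ coset_leader q ((q ^ (2 * t) + 1) %/ 2) i.
Proof.
move=> q_odd small [_ least]; have := least _ (ex_intro _ d erefl).
by rewrite -(leq_pmul2l (isT : 0 < 2)) double_modn_half // leqNgt small.
Qed.

Section WindowCriterion.

Variables (q t i : nat).
Hypotheses (q_odd : odd q) (t_gt0 : 0 < t).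
Local Notation N := (q ^ t * q ^ t + 1).
Local Notation n := ((q ^ (2 * t) + 1) %/ 2).
Hypothesis window : forall d, 0 < d < 2 * t ->
  2 * i < (2 * i * q ^ d) %% N < N - 2 * i.

Lemma modn_pow_period x d : (x * q ^ d) %% N = (x * q ^ (d %% (4 * t))) %% N.
Proof.
rewrite {1}(divn_eq d (4 * t)); elim: (d %/ (4 * t)) => [|k IH].
  by rewrite mul0n add0n.
have -> : q ^ (k.+1 * (4 * t) + d %% (4 * t)) =
          q ^ (k * (4 * t) + d %% (4 * t)) * (q ^ t * q ^ t * (q ^ t * q ^ t)).
  by rewrite -!expnD; congr (_ ^ _); lia.
by rewrite mulnA modn_sqrS_mulsqr2.
Qed.

Let i_bounds : 0 < 2 * i < N - 2 * i.
Proof.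
have /andP[lo hi] := window (d:=1) (ltac:(lia)).
by case: i lo hi => [|j]; rewrite ?muln0 ?mul0n ?mod0n //; lia.
Qed.

Lemma residue_period d : 4 * t %| d -> (2 * i * q ^ d) %% N = 2 * i.
Proof.
by move=> /eqP dvd; rewrite modn_pow_period dvd expn0 muln1 modn_small //; lia.
Qed.

Lemma residue_gt d : ~~ (4 * t %| d) -> 2 * i < (2 * i * q ^ d) %% N.
Proof.
rewrite /dvdn modn_pow_period => r_neq0.
have : d %% (4 * t) < 4 * t by rewrite ltn_pmod //; lia.
move: (d %% _) r_neq0 => r r_neq0 r_lt.
have [r_lt2t | r_ge2t] := ltnP r (2 * t).
  by case/andP: (window (d:=r) (ltac:(lia))).
have -> : q ^ r = q ^ (r - 2 * t) * (q ^ t * q ^ t).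
  by rewrite -!expnD; congr (_ ^ _); lia.
have [s0 | s_gt0] := posnP (r - 2 * t).
  by rewrite s0 expn0 mul1n modn_sqrS_mulsqr modn_small; lia.
have /andP[lo hi] := window (d:=r - 2 * t) (ltac:(lia)).
by rewrite mulnA modn_sqrS_mulsqr; lia.
Qed.

Lemma coset_leader_of_window : coset_leader q n i.
Proof.
split=> [|_ [j ->]].
  by rewrite -(ltn_pmul2l (isT : 0 < 2)) -odd_pow_sqrS_half //; lia.
rewrite -(leq_pmul2l (isT : 0 < 2)) double_modn_half //.
have [/residue_period -> // | /residue_gt] := boolP (4 * t %| j).
exact: ltnW.
Qed.

Lemma card_cyc_coset_of_window : #|cyc_coset q n i| = 2 * (2 * t).
Proof.
have n_gt0 : 0 < n by rewrite -(ltn_pmul2l (isT : 0 < 2)) -odd_pow_sqrS_half //; lia.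
pose f (d : 'I_(4 * t)) : 'I_n := Ordinal (ltn_pmod (i * q ^ d) n_gt0).
have f_inj : injective f.
  move=> d1 d2 /(congr1 (fun x : 'I_n => 2 * val x)) /=.
  rewrite !double_modn_half // => e.
  wlog lt12 : d1 d2 e / d1 < d2.
    move=> wl; case: (ltngtP d1 d2) => [lt|lt|/val_inj //]; first exact: wl.
    by symmetry; apply: wl (esym e) lt.
  have shift : (2 * i * q ^ (d1 + (4 * t - d2))) %% N = (2 * i * q ^ (4 * t)) %% N.
    rewrite expnD mulnA -modnMml e modnMml -mulnA -expnD subnKC //.
    exact: ltnW.
  have ndvd : ~~ (4 * t %| d1 + (4 * t - d2)).
    have d2_lt := ltn_ord d2; clear -lt12 d2_lt.
    by rewrite /dvdn modn_small; lia.
  by move: (residue_gt ndvd); rewrite shift residue_period // ltnn.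
have t4_le_n : 4 * t <= n by have := leq_card f f_inj; rewrite !card_ord.
have -> : cyc_coset q n i = f @: [set: 'I_(4 * t)].
  apply/setP => x; rewrite inE; apply/existsP/imsetP => [[j /eqP xj] | [d _ ->]].
    exists (Ordinal (ltn_pmod j (ltac:(lia) : 0 < 4 * t))) => //.
    apply: val_inj; rewrite /= -xj.
    apply/eqP; rewrite -(eqn_pmul2l (isT : 0 < 2)) !double_modn_half //.
    by rewrite modn_pow_period.
  by exists (Ordinal (leq_trans (ltn_ord d) t4_le_n)).
by rewrite card_imset // cardsT card_ord; lia.
Qed.

End WindowCriterion.

Lemma low_digit_mul_pow q t u s : 1 < q -> ~~ (q %| u) -> 0 < s < t ->
  q ^ s %| (u * q ^ s) %% q ^ t /\ q <= (u * q ^ s) %% q ^ t <= q ^ t - q.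
Proof.
move=> q_gt1 q_ndvd_u /andP[s_gt0 s_lt].
have q_dvd_qs : q %| q ^ s by rewrite dvdn_exp.
have Q_split : q ^ t = q ^ (t - s) * q ^ s by rewrite -expnD subnK // ltnW.
have qs_dvd_Q : q ^ s %| q ^ t by rewrite Q_split dvdn_mull.
have qs_dvd_b : q ^ s %| (u * q ^ s) %% q ^ t.
  by rewrite /dvdn modn_dvdm // -/(dvdn _ _) dvdn_mull.
have b_lt : (u * q ^ s) %% q ^ t < q ^ t by rewrite ltn_mod expn_gt0; lia.
have b_gt0 : 0 < (u * q ^ s) %% q ^ t.
  rewrite lt0n; apply: contra q_ndvd_u => Q_dvd.
  have : q ^ t %| u * q ^ s := Q_dvd.
  rewrite Q_split dvdn_pmul2r ?expn_gt0; last lia.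
  by apply: dvdn_trans; rewrite dvdn_exp ?subn_gt0.
split=> //; apply/andP; split.
  exact: dvdn_leq b_gt0 (dvdn_trans q_dvd_qs qs_dvd_b).
have : q <= q ^ t - (u * q ^ s) %% q ^ t.
  apply: dvdn_leq; first by rewrite subn_gt0.
  exact: dvdn_trans q_dvd_qs (dvdn_sub qs_dvd_Q qs_dvd_b).
lia.
Qed.

Definition balanced_digits (Q u : nat) : bool := u %/ Q < u %% Q < Q - u %/ Q.

Section DigitWindow.

Variables (q t u : nat).
Hypotheses (q_ge3 : 3 <= q) (t_ge2 : 2 <= t) (q_ndvd_u : ~~ (q %| u)).
Local Notation Q := (q ^ t).
Local Notation P := (q ^ t.-1).
Local Notation N := (Q * Q + 1).
Hypothesis u_small : u + q * q <= q * Q.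

Let u_gt0 : 0 < u. Proof. by case: u q_ndvd_u; rewrite ?dvdn0. Qed.
Let Q_eq : Q = q * P. Proof. by rewrite -expnS prednK //; lia. Qed.
Let q_le_P : q <= P. Proof. by rewrite -{1}(expn1 q) leq_pexp2l; lia. Qed.
Let u_lt : u < q * Q.
Proof. have qq_gt0 : 0 < q * q by rewrite muln_gt0 andbb; lia. lia. Qed.
Let u_bound : u * (P + 1) < N.
Proof.
have := leq_mul u_small (leqnn (P + 1)); rewrite Q_eq.
by move: (q * q) (leq_pmulr q (leq_trans (isT : 0 < 3) q_ge3)) => qq qq_ge; nia.
Qed.
Let uP_lt : u * P < Q * Q. Proof. by move: u_bound; clear -u_gt0; lia. Qed.

Lemma window_low d : 0 < d < t -> u < (u * q ^ d) %% N < N - u.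
Proof.
case/andP=> d_gt0 d_lt.
have qd_le : q ^ d <= P by rewrite leq_pexp2l; lia.
have qd_ge : q <= q ^ d by rewrite -{1}(expn1 q) leq_pexp2l; lia.
have : u * q ^ d <= u * P by rewrite leq_mul2l qd_le orbT.
rewrite modn_small; nia.
Qed.

Lemma window_mid : balanced_digits Q u -> u < (u * Q) %% N < N - u.
Proof.
have Q_gt0 : 0 < Q by rewrite expn_gt0; lia.
rewrite /balanced_digits => digits; rewrite (divn_eq u Q).
move: digits (ltn_pmod u Q_gt0).
move: (u %/ Q) (u %% Q) => a b /andP[a_lt_b b_lt_Qa] b_lt.
have lo : a.+1 * Q <= b * Q by rewrite leq_mul2r a_lt_b orbT.
have hi : (a + b).+1 * Q <= Q * Q by rewrite leq_mul2r orbC -ltn_subRL b_lt_Qa.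
by rewrite modn_sqrS_mul_digits; clear -lo hi a_lt_b b_lt_Qa b_lt; nia.
Qed.

Lemma window_high d : t < d < 2 * t -> u < (u * q ^ d) %% N < N - u.
Proof.
case/andP=> t_lt d_lt; set s := d - t.
have s_bounds : 0 < s < t by lia.
have [qs_dvd_b /andP[q_le_b b_le]] := low_digit_mul_pow (ltnW q_ge3) q_ndvd_u s_bounds.
have w_lt : u * q ^ s < Q * Q.
  by apply: leq_ltn_trans uP_lt; rewrite leq_mul2l leq_pexp2l ?orbT; lia.
have a_lt : (u * q ^ s) %/ Q < Q by rewrite ltn_divLR // expn_gt0; lia.
have b_gt0 : 0 < (u * q ^ s) %% Q by lia.
have Q_gt0 : 0 < Q by lia.
have -> : q ^ d = q ^ s * Q by rewrite -expnD subnK // ltnW.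
rewrite mulnA (divn_eq (u * q ^ s) Q) modn_sqrS_mul_digits ?ltn_pmod //.
move: (divn_eq (u * q ^ s) Q) qs_dvd_b q_le_b b_le a_lt.
move: ((u * q ^ s) %/ Q) ((u * q ^ s) %% Q) => a b w_eq qs_dvd_b q_le_b b_le a_lt.
have upper : b * Q + u < Q * Q + 1.
  have bq_le : b + q <= Q by lia.
  have := leq_mul bq_le (leqnn Q); lia.
suff lower : u + a < b * Q by move: upper lower; clear; lia.
case: (ltngtP q b) q_le_b => [b_gt | // | b_eq] _.
  have := leq_mul b_gt (leqnn Q); lia.
have s_eq1 : s = 1.
  move: qs_dvd_b; rewrite -b_eq => /(dvdn_leq (ltnW (ltnW q_ge3))).
  by rewrite -{2}(expn1 q) leq_exp2l; lia.
rewrite -b_eq s_eq1 expn1 Q_eq in w_eq *.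
have u_eq : u = a * P + 1.
  apply/eqP; rewrite -(eqn_pmul2r (ltnW (ltnW q_ge3))) w_eq; apply/eqP.
  by rewrite mulnDl mul1n mulnAC mulnA.
have P_gt0 : 0 < P by rewrite expn_gt0; lia.
rewrite -(ltn_pmul2l P_gt0); move: u_bound; rewrite Q_eq u_eq.
by clear; nia.
Qed.

Lemma window_of_digits d : balanced_digits Q u -> 0 < d < 2 * t ->
  u < (u * q ^ d) %% N < N - u.
Proof.
move=> digits /andP[d_gt0 d_lt]; case: (ltngtP d t) => [lt | gt | ->].
- by apply: window_low; rewrite d_gt0.
- by apply: window_high; rewrite gt.
- exact: window_mid.
Qed.

End DigitWindow.

Lemma coset_leader_of_digits q t i : 3 <= q -> odd q -> 2 <= t -> ~~ (q %| i) ->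
  2 * i + q * q <= q * q ^ t -> balanced_digits (q ^ t) (2 * i) ->
  coset_leader q ((q ^ (2 * t) + 1) %/ 2) i /\
  #|cyc_coset q ((q ^ (2 * t) + 1) %/ 2) i| = 2 * (2 * t).
Proof.
move=> q_ge3 q_odd t_ge2 q_ndvd_i bound digits.
have q_ndvd_2i : ~~ (q %| 2 * i) by rewrite Gauss_dvdr // coprime_sym coprime2n.
have t_gt0 : 0 < t by lia.
have window d := window_of_digits q_ge3 t_ge2 q_ndvd_2i bound (d:=d) digits.
by split; [apply: coset_leader_of_window | apply: card_cyc_coset_of_window].
Qed.

Lemma divn_modn_eq Q u A B : u = A * Q + B -> B < Q -> u %/ Q = A /\ u %% Q = B.
Proof.
move=> -> B_lt; have Q_gt0 : 0 < Q by lia.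
by rewrite divnMDl // divn_small // addn0 modnMDl modn_small.
Qed.

Lemma not_coset_leader_of_digits_le q t i A B : odd q ->
  2 * i = A * q ^ t + B -> 0 < B -> B <= A -> A < q ^ t ->
  ~ coset_leader q ((q ^ (2 * t) + 1) %/ 2) i.
Proof.
move=> q_odd ediv B_gt0 B_le_A A_lt.
apply: (not_coset_leader_of_small_residue (d:=t) q_odd).
rewrite ediv modn_sqrS_mul_digits; try lia.
have : B * q ^ t <= A * q ^ t by rewrite leq_mul2r B_le_A orbT.
lia.
Qed.

Lemma not_coset_leader_of_digits_sum_gt q t i A B : odd q ->
  2 * i = A * q ^ t + B -> 0 < B -> B < q ^ t -> A < q ^ t -> q ^ t < A + B ->
  ~ coset_leader q ((q ^ (2 * t) + 1) %/ 2) i.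
Proof.
move=> q_odd ediv B_gt0 B_lt A_lt sum_gt.
apply: (not_coset_leader_of_small_residue (d:=t + (t + t)) q_odd).
have res_t : (2 * i * q ^ t) %% (q ^ t * q ^ t + 1) = B * q ^ t - A.
  by rewrite ediv modn_sqrS_mul_digits.
have BQ_ge : q ^ t <= B * q ^ t by rewrite leq_pmull.
have res_t_neq0 : (2 * i * q ^ t) %% (q ^ t * q ^ t + 1) != 0 by rewrite res_t; lia.
have : (q ^ t).+1 * q ^ t <= (A + B) * q ^ t by rewrite leq_mul2r sum_gt orbT.
rewrite 2!expnD mulnA modn_sqrS_mulsqr // res_t; lia.
Qed.

Lemma not_coset_leader_of_unbalanced q t i : odd q -> 0 < t -> ~~ (q %| i) ->
  2 * i < q ^ t * q ^ t -> ~~ balanced_digits (q ^ t) (2 * i) ->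
  ~ coset_leader q ((q ^ (2 * t) + 1) %/ 2) i.
Proof.
move=> q_odd t_gt0 q_ndvd_i lt_sqr unbalanced.
have Q_gt0 : 0 < q ^ t by rewrite expn_gt0 odd_gt0.
have ediv := divn_eq (2 * i) (q ^ t).
have A_lt : (2 * i) %/ q ^ t < q ^ t by rewrite ltn_divLR.
have B_gt0 : 0 < (2 * i) %% q ^ t.
  rewrite lt0n; apply: contra q_ndvd_i => Q_dvd.
  have : q %| 2 * i := dvdn_trans (dvdn_exp t_gt0 (dvdnn q)) Q_dvd.
  by rewrite Gauss_dvdr // coprime_sym coprime2n.
have B_lt : (2 * i) %% q ^ t < q ^ t by rewrite ltn_mod.
(* The digit sum has the parity of [2 * i], whereas [q ^ t] is odd. *)
have sum_neq : (2 * i) %/ q ^ t + (2 * i) %% q ^ t != q ^ t.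
  apply/eqP=> sum_eq; have := congr1 odd ediv.
  by rewrite oddD !oddM oddX q_odd orbT andbT -oddD sum_eq oddX q_odd orbT.
have [B_le_A | A_lt_B] := leqP ((2 * i) %% q ^ t) ((2 * i) %/ q ^ t).
  exact: not_coset_leader_of_digits_le q_odd ediv B_gt0 B_le_A A_lt.
apply: not_coset_leader_of_digits_sum_gt q_odd ediv B_gt0 B_lt A_lt _.
by move: unbalanced; rewrite /balanced_digits A_lt_B /=; lia.
Qed.

Section Classification.

Variables (q t : nat).
Hypotheses (q_ge3 : 3 <= q) (q_odd : odd q) (t_gt0 : 0 < t).
Local Notation Q := (q ^ t).

Let q_le_Q : q <= Q. Proof. by rewrite -{1}(expn1 q) leq_pexp2l; lia. Qed.
Let q_half : q = 2 * ((q - 1) %/ 2) + 1.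
Proof. by have := modn2 q; rewrite q_odd; lia. Qed.
Let Q_half : Q = 2 * ((Q - 1) %/ 2) + 1.
Proof. by have := modn2 Q; rewrite oddX q_odd orbT; lia. Qed.
Let Q_succ_half : (Q + 1) %/ 2 = (Q - 1) %/ 2 + 1.
Proof. by rewrite {1}Q_half; lia. Qed.

Lemma unbalanced_of_X i : X1 q t i \/ X2 q t i \/ X3 q t i \/ X4 q t i ->
  ~~ balanced_digits Q (2 * i).
Proof.
rewrite /X1 /X2 /X3 /X4 /balanced_digits Q_succ_half.
move: q_half Q_half; move: ((q - 1) %/ 2) ((Q - 1) %/ 2) => h K q_eq Q_eq.
case=> [[a [b [b_ge1 b_le a_le ->]]] | [[[|a] [b [b_ge1 b_lt a_le ->]]] |
        [[a [b [b_ge1 b_le a_lt [->|->]]]] | [a [a_lt ->]]]]] //.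
- have [-> ->] : (2 * (a * Q + b)) %/ Q = 2 * a /\ (2 * (a * Q + b)) %% Q = 2 * b.
    by apply: divn_modn_eq; lia.
  lia.
- have [-> ->] : (2 * (a.+1 * Q - b)) %/ Q = 2 * a + 1 /\
                 (2 * (a.+1 * Q - b)) %% Q = Q - 2 * b.
    by apply: divn_modn_eq; lia.
  lia.
- have [-> ->] : (2 * (a * Q + K + b)) %/ Q = 2 * a + 1 /\
                 (2 * (a * Q + K + b)) %% Q = 2 * b - 1.
    by apply: divn_modn_eq; lia.
  lia.
- have [-> ->] : (2 * (a * Q + (K + 1) - b)) %/ Q = 2 * a /\
                 (2 * (a * Q + (K + 1) - b)) %% Q = Q + 1 - 2 * b.
    by apply: divn_modn_eq; lia.
  lia.
- have [-> ->] : (2 * (a * (Q + 1) + (K + 1))) %/ Q = 2 * a + 1 /\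
                 (2 * (a * (Q + 1) + (K + 1))) %% Q = 2 * a + 1.
    by apply: divn_modn_eq; lia.
  lia.
Qed.

Lemma X_of_unbalanced i : (Q + 1) %/ 2 <= i -> ~~ (q %| i) ->
  2 * i + q * q <= q * Q -> ~~ balanced_digits Q (2 * i) ->
  X1 q t i \/ X2 q t i \/ X3 q t i \/ X4 q t i.
Proof.
rewrite /X1 /X2 /X3 /X4 /balanced_digits Q_succ_half => i_ge q_ndvd_i i_le.
have Q_gt0 : 0 < Q by lia.
have b_gt0 : 0 < i %% Q.
  rewrite lt0n; apply: contra q_ndvd_i => Q_dvd.
  exact: dvdn_trans (dvdn_exp t_gt0 (dvdnn q)) Q_dvd.
move: (divn_eq i Q) (ltn_pmod i Q_gt0) b_gt0 q_half Q_half i_le.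
move: (i %/ Q) (i %% Q) ((q - 1) %/ 2) ((Q - 1) %/ 2).
move=> a b h K -> b_lt b_gt0 q_eq Q_eq i_le.
have q_le_qq : q <= q * q by rewrite leq_pmull; lia.
have a_le : a <= h.
  rewrite leqNgt; apply/negP => h_lt_a.
  have : h.+1 * Q <= a * Q by rewrite leq_mul2r h_lt_a orbT.
  lia.
have a_lt_of_sum : K + 1 <= a + b -> a < h.
  move=> sum_ge; rewrite ltn_neqAle a_le andbT; apply/eqP => a_eq.
  by rewrite a_eq in i_le sum_ge; lia.
have [b_le | b_gt] := leqP b K.
  have [-> ->] : (2 * (a * Q + b)) %/ Q = 2 * a /\ (2 * (a * Q + b)) %% Q = 2 * b.
    by apply: divn_modn_eq; lia.
  have [b_le_a | a_lt_b] := leqP b a => unbalanced.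
    by left; exists a, b.
  have a_lt : a < h by apply: a_lt_of_sum; lia.
  by right; right; left; exists a, (K + 1 - b); split; lia.
have [-> ->] : (2 * (a * Q + b)) %/ Q = 2 * a + 1 /\ (2 * (a * Q + b)) %% Q = 2 * b - Q.
  by apply: divn_modn_eq; lia.
have a_lt : a < h by apply: a_lt_of_sum; lia.
have [B_le | B_gt] := leqP (2 * b - Q) (2 * a + 1) => unbalanced.
  have [c_le | c_gt] := leqP (b - K) a.
    by right; right; left; exists a, (b - K); split; try lia; left; lia.
  by right; right; right; exists a; split; lia.
by right; left; exists a.+1, (Q - b); split; lia.
Qed.

End Classification.

Lemma not_coset_leader_X5 q t i : odd q -> 3 <= t -> X5 q t i ->
  ~ coset_leader q ((q ^ (2 * t) + 1) %/ 2) i.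
Proof.
move=> q_odd t_ge3 [lo hi _].
apply: (not_coset_leader_of_small_residue (d:=t.-1 + (t + t)) q_odd).
have q_gt0 : 0 < q by rewrite odd_gt0.
have P_ge : q * q <= q ^ t.-1.
  by rewrite mulnn leq_pexp2l //; lia.
have Q_eq : q ^ t = q * q ^ t.-1 by rewrite -expnS prednK //; lia.
have qQ_odd : (q * q ^ t) %% 2 = 1 by rewrite modn2 oddM oddX q_odd orbT.
have qq_odd : (q * q) %% 2 = 1 by rewrite modn2 oddM q_odd.
rewrite expnS -mulnn in lo hi.
rewrite 2!expnD mulnA.
move: lo hi qQ_odd; rewrite Q_eq; move: (q ^ t.-1) P_ge => P P_ge lo hi qQ_odd.
have small : 2 * i * P < q * P * (q * P) + 1 by nia.
have pos : 0 < 2 * i * P by rewrite !muln_gt0; nia.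
have nz : (2 * i * P) %% (q * P * (q * P) + 1) != 0 by rewrite modn_small // -lt0n.
have two_i : q * q * P + 2 <= 2 * i + q * q by lia.
have := leq_mul two_i (leqnn P.+1).
by rewrite modn_sqrS_mulsqr // modn_small //; lia.
Qed.

Lemma bound_of_not_X5 q t i : odd q -> i <= (q ^ t.+1 - 1) %/ 2 -> ~~ (q %| i) ->
  ~ X5 q t i -> 2 * i + q * q <= q * q ^ t.
Proof.
move=> q_odd hi q_ndvd_i not_X5; rewrite leqNgt; apply/negP => gt; apply: not_X5.
have qQ_odd : (q * q ^ t) %% 2 = 1 by rewrite modn2 oddM oddX q_odd orbT.
have qq_odd : (q * q) %% 2 = 1 by rewrite modn2 oddM q_odd.
have i_gt0 : 0 < i by rewrite lt0n; apply: contraNneq q_ndvd_i => ->.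
by split=> //; rewrite expnS -mulnn; lia.
Qed.

Lemma prime_power_odd_ge3 q : prime_power q -> odd q -> 3 <= q.
Proof.
case=> p [k [p_prime [k_gt0 ->]]] q_odd.
have p_le : p <= p ^ k by rewrite -{1}(expn1 p) leq_pexp2l // prime_gt0.
have q_neq2 : p ^ k != 2 by apply: contraTneq q_odd => ->.
by have := prime_gt1 p_prime; lia.
Qed.

Section CosetLeaders.

Variables (q t : nat).
Hypotheses (q_ge3 : 3 <= q) (q_odd : odd q) (t_gt0 : 0 < t).
Local Notation Q := (q ^ t).
Local Notation n := ((q ^ (2 * t) + 1) %/ 2).

Let Q_half : Q = 2 * ((Q + 1) %/ 2) - 1.
Proof. by have := modn2 Q; rewrite oddX q_odd orbT; lia. Qed.
Let q_le_Q : q <= Q. Proof. by rewrite -{1}(expn1 q) leq_pexp2l //; lia. Qed.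

Lemma coset_leader_small_range i : 2 <= t ->
  (Q + 1) %/ 2 <= i <= Q + 1 -> ~~ (q %| i) -> i != (Q + 1) %/ 2 -> i != Q + 1 ->
  coset_leader q n i /\ #|cyc_coset q n i| = 2 * (2 * t).
Proof.
move=> t_ge2 /andP[lo hi] q_ndvd_i i_neq_half i_neq_Qsucc.
have i_neq_Q : i != Q by apply: contraNneq q_ndvd_i => ->; rewrite dvdn_exp //; lia.
have qq_le : q * q <= Q by rewrite mulnn leq_pexp2l //; lia.
have qQ_ge : 3 * Q <= q * Q by rewrite leq_mul2r q_ge3 orbT.
apply: coset_leader_of_digits => //; first lia.
rewrite /balanced_digits.
have [-> ->] : (2 * i) %/ Q = 1 /\ (2 * i) %% Q = 2 * i - Q.
  by apply: divn_modn_eq; lia.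
lia.
Qed.

Lemma not_coset_leader_half : ~ coset_leader q n ((Q + 1) %/ 2).
Proof.
by apply: (@not_coset_leader_of_digits_le _ _ _ 1 1 q_odd); lia.
Qed.

Lemma not_coset_leader_Q_succ : ~ coset_leader q n (Q + 1).
Proof.
by apply: (@not_coset_leader_of_digits_le _ _ _ 2 2 q_odd); lia.
Qed.

Lemma coset_leader_large_range i : 2 <= t ->
  (Q + 1) %/ 2 <= i <= (q ^ t.+1 - 1) %/ 2 -> ~~ (q %| i) ->
  ~ (X1 q t i \/ X2 q t i \/ X3 q t i \/ X4 q t i \/ X5 q t i) ->
  coset_leader q n i /\ #|cyc_coset q n i| = 2 * (2 * t).
Proof.
move=> t_ge2 /andP[lo hi] q_ndvd_i not_X.
have bound : 2 * i + q * q <= q * Q.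
  by apply: bound_of_not_X5 => // X5; apply: not_X; tauto.
apply: coset_leader_of_digits => //.
apply: contraT => unbalanced; case: not_X.
have : X1 q t i \/ X2 q t i \/ X3 q t i \/ X4 q t i by apply: X_of_unbalanced.
tauto.
Qed.

Lemma not_coset_leader_X i : 3 <= t -> i <= (q ^ t.+1 - 1) %/ 2 -> ~~ (q %| i) ->
  X1 q t i \/ X2 q t i \/ X3 q t i \/ X4 q t i \/ X5 q t i ->
  ~ coset_leader q n i.
Proof.
move=> t_ge3 hi q_ndvd_i X.
have [X14 | X5] : (X1 q t i \/ X2 q t i \/ X3 q t i \/ X4 q t i) \/ X5 q t i by tauto.
  have qQ_le : q * Q <= Q * Q by rewrite leq_mul2r q_le_Q orbT.
  rewrite expnS in hi.
  by apply: not_coset_leader_of_unbalanced => //; [lia | apply: unbalanced_of_X].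
by apply: (not_coset_leader_X5 q_odd _ X5); lia.
Qed.

End CosetLeaders.

Theorem lemma14 (q t : nat) (hpp : prime_power q) (hodd : odd q) :
  let m := 2 * t in
  let n := (q ^ m + 1) %/ 2 in
  (4 <= m ->
     (forall i : nat, (q ^ t + 1) %/ 2 <= i <= q ^ t + 1 -> ~~ (q %| i) ->
        i != (q ^ t + 1) %/ 2 -> i != q ^ t + 1 ->
        coset_leader q n i /\ #|cyc_coset q n i| = 2 * m)
     /\ ~ coset_leader q n ((q ^ t + 1) %/ 2)
     /\ ~ coset_leader q n (q ^ t + 1))
  /\
  (8 <= m ->
     forall i : nat, (q ^ t + 1) %/ 2 <= i <= (q ^ t.+1 - 1) %/ 2 -> ~~ (q %| i) ->
       ((~ (X1 q t i \/ X2 q t i \/ X3 q t i \/ X4 q t i \/ X5 q t i) ->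
           coset_leader q n i /\ #|cyc_coset q n i| = 2 * m)
        /\ ((X1 q t i \/ X2 q t i \/ X3 q t i \/ X4 q t i \/ X5 q t i) ->
           ~ coset_leader q n i))).
Proof.
have q_ge3 := prime_power_odd_ge3 hpp hodd.
move=> m n; split=> [m_ge4 | m_ge8 i i_range q_ndvd_i].
  have t_gt0 : 0 < t by lia.
  split; first by move=> i; apply: coset_leader_small_range; lia.
  by split; [apply: not_coset_leader_half | apply: not_coset_leader_Q_succ].
have t_gt0 : 0 < t by lia.
split=> [not_X | X]; first by apply: coset_leader_large_range => //; lia.
by case/andP: i_range => _ hi; apply: not_coset_leader_X X => //; lia.
Qed.
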